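(* Let $\lambda\in(0,1)$, $X=[0,1]^2$, $X_1=\{(x,y)\in X:y<x^2\}$, $X_2=\{(x,y)\in X:y>x^2\}$, $f_1(x,y)=\lambda(x,y)$ and $f_2(x,y)=\lambda(x,y)+(0,1-\lambda)$. Let $f:X\to X$ be any map with $f|_{X_i}=f_i$ for $i=1,2$. Then $L=\Omega=\{(0,0),(0,1)\}$ and $\Lambda=\overline{\{(0,1-\lambda^n):n\in\mathbb N\}}$.
   Context: Here $\Delta:=X\setminus(X_1\cup X_2)$ and $\tilde X:=\bigcap_{n\ge0}f^{-n}(X\setminus\Delta)$. For $x\in\tilde X$, $\omega(x)$ is the set of limits of $f^{n_k}(x)$ along divergent sequences $(n_k)$; $L:=\overline{\bigcup_{x\in\tilde X}\omega(x)}$. A point $x\in X$ is non-wandering if for every $\epsilon>0$ there is a divergent sequence $(n_k)$ with $f^{n_k}(B(x,\epsilon)\cap\tilde X)\cap B(x,\epsilon)\ne\emptyset$ for all $k$; $\Omega$ is the set of non-wandering points. With $F_i(A):=\overline{f(A\cap X_i)}$, atoms of generation $n$ are the sets $F_{i_n}\circ\cdots\circ F_{i_1}(X)$, $\Lambda_n$ is their union, and $\Lambda:=\bigcap_{n\ge1}\Lambda_n$. *)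

From Stdlib Require Import Reals List.
Open Scope R_scope.

Definition pt : Type := (R * R)%type.
Definition pset : Type := pt -> Prop.

Definition dist (p q : pt) : R :=
  sqrt ((fst p - fst q) ^ 2 + (snd p - snd q) ^ 2).

Definition ball (x : pt) (e : R) : pset := fun q => dist x q < e.

Definition closure (A : pset) : pset :=
  fun p => forall e, 0 < e -> exists q, A q /\ dist p q < e.

Definition divergent (n : nat -> nat) : Prop :=
  forall N, exists K, forall k, (K <= k)%nat -> (N <= n k)%nat.

Definition seq_lim (u : nat -> pt) (y : pt) : Prop :=
  forall e, 0 < e -> exists K, forall k, (K <= k)%nat -> dist (u k) y < e.

Section General.
Variables (X X1 X2 : pset) (f : pt -> pt).

Definition Delta : pset := fun p => X p /\ ~ X1 p /\ ~ X2 p.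

Definition Xtilde : pset :=
  fun p => forall n : nat, X (Nat.iter n f p) /\ ~ Delta (Nat.iter n f p).

Definition omega (x : pt) : pset :=
  fun y => exists n : nat -> nat, divergent n /\ seq_lim (fun k => Nat.iter (n k) f x) y.

Definition Lset : pset := closure (fun y => exists x, Xtilde x /\ omega x y).

Definition nonwandering (x : pt) : Prop :=
  X x /\
  forall e, 0 < e ->
    exists n : nat -> nat, divergent n /\
      forall k, exists z, ball x e z /\ Xtilde z /\ ball x e (Nat.iter (n k) f z).

Definition Omega : pset := nonwandering.

(* index i : bool, false <-> 1, true <-> 2 *)
Definition Xi (i : bool) : pset := if i then X2 else X1.

Definition Fop (i : bool) (A : pset) : pset :=
  closure (fun q => exists p, A p /\ Xi i p /\ q = f p).

(* atom for the word [i_1; ...; i_n] : F_{i_n} o ... o F_{i_1} (X) *)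
Definition atom (w : list bool) : pset :=
  fold_left (fun A i => Fop i A) w X.

Definition Lambda_n (n : nat) : pset :=
  fun p => exists w : list bool, length w = n /\ atom w p.

Definition Lambda : pset := fun p => forall n : nat, (1 <= n)%nat -> Lambda_n n p.

End General.

Definition Xsq : pset := fun p => 0 <= fst p <= 1 /\ 0 <= snd p <= 1.
Definition X1ex : pset := fun p => Xsq p /\ snd p < (fst p) ^ 2.
Definition X2ex : pset := fun p => Xsq p /\ snd p > (fst p) ^ 2.
Definition f1ex (lam : R) (p : pt) : pt := (lam * fst p, lam * snd p).
Definition f2ex (lam : R) (p : pt) : pt := (lam * fst p, lam * snd p + (1 - lam)).

(* Both maps contract the first coordinate by lam, so surviving orbits approach the y-axis.
   An orbit that stays below the parabola is simply scaled towards (0,0); once it is above,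
   it stays above and f2 drives it to the fixed point (0,1).
   For Lambda, closedness of the relevant boxes shows that an atom of generation n lies in
   [0,lam^n]^2 or, above the parabola, in [0,lam^n] x [1-lam^m, 1-lam^m+lam^n]; conversely the
   points (0,1-lam^m) and (0,1) are limits of orbits with itinerary 1...1 2...2 starting just
   above the parabola near the origin. *)

From Stdlib Require Import Reals Rgeom List Lra Lia Classical.
Open Scope R_scope.

(** * Distance, closed sets and continuity *)

Lemma dist_fst p q : Rabs (fst p - fst q) <= dist p q.
Proof.
  unfold dist. rewrite <- (sqrt_pow2 (Rabs (fst p - fst q))) by apply Rabs_pos.
  apply sqrt_le_1_alt. rewrite pow2_abs. pose proof (pow2_ge_0 (snd p - snd q)). lra.
Qed.

Lemma dist_snd p q : Rabs (snd p - snd q) <= dist p q.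
Proof.
  unfold dist. rewrite <- (sqrt_pow2 (Rabs (snd p - snd q))) by apply Rabs_pos.
  apply sqrt_le_1_alt. rewrite pow2_abs. pose proof (pow2_ge_0 (fst p - fst q)). lra.
Qed.

Lemma dist_le_sum p q : dist p q <= Rabs (fst p - fst q) + Rabs (snd p - snd q).
Proof.
  pose proof (Rabs_pos (fst p - fst q)); pose proof (Rabs_pos (snd p - snd q)).
  unfold dist. rewrite <- (sqrt_pow2 (Rabs (fst p - fst q) + Rabs (snd p - snd q))) by lra.
  apply sqrt_le_1_alt.
  rewrite <- (pow2_abs (fst p - fst q)), <- (pow2_abs (snd p - snd q)). nra.
Qed.

Lemma dist_refl p : dist p p = 0.
Proof. unfold dist. rewrite !Rminus_diag, pow_i, Rplus_0_l by lia. apply sqrt_0. Qed.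

Lemma dist_sym p q : dist p q = dist q p.
Proof. unfold dist. f_equal. ring. Qed.

Lemma dist_triangle p q r : dist p r <= dist p q + dist q r.
Proof.
  destruct p as [x0 y0], q as [x1 y1], r as [x2 y2].
  pose proof (triangle x0 y0 x2 y2 x1 y1) as H.
  unfold dist_euc in H. rewrite !Rsqr_pow2 in H. exact H.
Qed.

Lemma dist_pos p q : p <> q -> 0 < dist p q.
Proof.
  intros Hpq. destruct (Rle_lt_or_eq_dec 0 (dist p q) (sqrt_pos _)) as [|H0]; auto.
  exfalso. apply Hpq.
  pose proof (dist_fst p q) as Hx; pose proof (dist_snd p q) as Hy. rewrite <- H0 in Hx, Hy.
  pose proof (Rle_abs (fst p - fst q)); pose proof (Rle_abs (snd p - snd q)).
  pose proof (Rle_abs (- (fst p - fst q))); pose proof (Rle_abs (- (snd p - snd q))).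
  rewrite !Rabs_Ropp in *.
  destruct p, q; simpl in *. f_equal; lra.
Qed.

Definition closed (C : pset) : Prop := forall p, closure C p -> C p.

Lemma closure_incl (A : pset) p : A p -> closure A p.
Proof. intros Hp e He. exists p. rewrite dist_refl. auto. Qed.

Lemma closure_min (B C : pset) p : closed C -> (forall q, B q -> C q) -> closure B p -> C p.
Proof.
  intros HC HBC Hp. apply HC. intros e He.
  destruct (Hp e He) as [q [Hq Hd]]. eauto.
Qed.

Lemma closed_closure (A : pset) : closed (closure A).
Proof.
  intros p Hp e He.
  destruct (Hp (e / 2) ltac:(lra)) as [q [Hq Hpq]].
  destruct (Hq (e / 2) ltac:(lra)) as [r [Hr Hqr]].
  exists r. split; auto. pose proof (dist_triangle p q r). lra.
Qed.

Lemma closed_and (C D : pset) : closed C -> closed D -> closed (fun q => C q /\ D q).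
Proof.
  intros HC HD p Hp. split.
  - exact (closure_min _ C p HC (fun q H => proj1 H) Hp).
  - exact (closure_min _ D p HD (fun q H => proj2 H) Hp).
Qed.

Lemma closed_pair a b : closed (fun q => q = a \/ q = b).
Proof.
  intros p Hp. apply NNPP. intros [Ha Hb]%not_or_and.
  pose proof (dist_pos p a Ha); pose proof (dist_pos p b Hb).
  destruct (Hp (Rmin (dist p a) (dist p b)) ltac:(apply Rmin_pos; lra)) as [q [[-> | ->] Hd]].
  - pose proof (Rmin_l (dist p a) (dist p b)). lra.
  - pose proof (Rmin_r (dist p a) (dist p b)). lra.
Qed.

Definition continuous (g : pt -> R) : Prop :=
  forall p e, 0 < e -> exists d, 0 < d /\ forall q, dist p q < d -> Rabs (g q - g p) < e.

Lemma continuous_const c : continuous (fun _ => c).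
Proof. intros p e He. exists 1. split; [lra|]. intros q _. rewrite Rminus_diag, Rabs_R0. lra. Qed.

Lemma continuous_fst : continuous fst.
Proof.
  intros p e He. exists e. split; auto. intros q Hq.
  rewrite Rabs_minus_sym. pose proof (dist_fst p q). lra.
Qed.

Lemma continuous_snd : continuous snd.
Proof.
  intros p e He. exists e. split; auto. intros q Hq.
  rewrite Rabs_minus_sym. pose proof (dist_snd p q). lra.
Qed.

Lemma continuous_mult g h : continuous g -> continuous h -> continuous (fun q => g q * h q).
Proof.
  intros Hg Hh p e He.
  set (K := Rabs (g p) + Rabs (h p) + 1).
  assert (HK : 1 <= K) by (unfold K; pose proof (Rabs_pos (g p)); pose proof (Rabs_pos (h p)); lra).
  set (e1 := Rmin 1 (e / K)).
  assert (He1 : 0 < e1) by (apply Rmin_pos; [lra | apply Rdiv_lt_0_compat; lra]).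
  assert (He1K : e1 * K <= e).
  { pose proof (Rmin_r 1 (e / K)) as H. apply (Rmult_le_compat_r K) in H; [|lra].
    unfold e1. field_simplify in H; lra. }
  destruct (Hg p e1 He1) as [d1 [Hd1 Hg1]]. destruct (Hh p e1 He1) as [d2 [Hd2 Hh2]].
  exists (Rmin d1 d2). split; [apply Rmin_pos; auto|]. intros q Hq.
  pose proof (Hg1 q (Rlt_le_trans _ _ _ Hq (Rmin_l _ _))) as Ha.
  pose proof (Hh2 q (Rlt_le_trans _ _ _ Hq (Rmin_r _ _))) as Hb.
  set (a := g q - g p) in Ha. set (b := h q - h p) in Hb.
  replace (g q * h q - g p * h p) with (a * b + a * h p + g p * b) by (unfold a, b; ring).
  assert (e1 <= 1) by apply Rmin_l.
  pose proof (Rabs_triang (a * b + a * h p) (g p * b)).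
  pose proof (Rabs_triang (a * b) (a * h p)).
  rewrite !Rabs_mult in *.
  pose proof (Rabs_pos a); pose proof (Rabs_pos b); pose proof (Rabs_pos (g p)); pose proof (Rabs_pos (h p)).
  assert (Rabs a * Rabs b <= Rabs a * 1) by (apply Rmult_le_compat_l; lra).
  assert (Rabs a * Rabs (h p) <= e1 * Rabs (h p)) by (apply Rmult_le_compat_r; lra).
  assert (Rabs (g p) * Rabs b <= Rabs (g p) * e1) by (apply Rmult_le_compat_l; lra).
  unfold K in He1K. lra.
Qed.

Lemma continuous_pow g n : continuous g -> continuous (fun q => g q ^ n).
Proof.
  intros Hg. induction n as [|n IH]; [exact (continuous_const 1)|].
  exact (continuous_mult g (fun q => g q ^ n) Hg IH).
Qed.

Lemma closed_le g h : continuous g -> continuous h -> closed (fun q => g q <= h q).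
Proof.
  intros Hg Hh p Hp. apply Rnot_lt_le. intros Hlt.
  set (e := (g p - h p) / 2).
  destruct (Hg p e ltac:(unfold e; lra)) as [d1 [Hd1 Hg1]].
  destruct (Hh p e ltac:(unfold e; lra)) as [d2 [Hd2 Hh2]].
  destruct (Hp (Rmin d1 d2) ltac:(apply Rmin_pos; auto)) as [q [Hq Hd]].
  destruct (Rabs_def2 _ _ (Hg1 q (Rlt_le_trans _ _ _ Hd (Rmin_l _ _)))).
  destruct (Rabs_def2 _ _ (Hh2 q (Rlt_le_trans _ _ _ Hd (Rmin_r _ _)))).
  unfold e in *. lra.
Qed.

(** * Sequences *)

Lemma pow_le_one lam n : 0 <= lam <= 1 -> lam ^ n <= 1.
Proof. intros H. rewrite <- (pow1 n). apply pow_incr. exact H. Qed.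

Lemma pow_eventually_lt lam y : 0 < lam < 1 -> 0 < y ->
  exists N, forall n, (N <= n)%nat -> lam ^ n < y.
Proof.
  intros Hlam Hy. destruct (pow_lt_1_zero lam ltac:(rewrite Rabs_pos_eq; lra) y Hy) as [N HN].
  exists N. intros n Hn. specialize (HN n Hn).
  rewrite Rabs_pos_eq in HN; [exact HN | apply pow_le; lra].
Qed.

Lemma seq_lim_ext u v l : (forall n, u n = v n) -> seq_lim u l -> seq_lim v l.
Proof. intros Huv Hu e He. destruct (Hu e He) as [K HK]. exists K. intros k Hk. rewrite <- Huv. auto. Qed.

Lemma seq_lim_unique u a b : seq_lim u a -> seq_lim u b -> a = b.
Proof.
  intros Ha Hb. apply NNPP. intros Hab. pose proof (dist_pos a b Hab) as Hd.
  destruct (Ha (dist a b / 2) ltac:(lra)) as [K1 H1].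
  destruct (Hb (dist a b / 2) ltac:(lra)) as [K2 H2].
  specialize (H1 (max K1 K2) ltac:(lia)). specialize (H2 (max K1 K2) ltac:(lia)).
  pose proof (dist_triangle a (u (max K1 K2)) b). rewrite dist_sym in H1. lra.
Qed.

Lemma seq_lim_subseq u n l : divergent n -> seq_lim u l -> seq_lim (fun k => u (n k)) l.
Proof.
  intros Hn Hu e He. destruct (Hu e He) as [N HN]. destruct (Hn N) as [K HK].
  exists K. intros k Hk. apply HN, HK, Hk.
Qed.

Lemma seq_lim_shift u N l : seq_lim (fun k => u (k + N)%nat) l -> seq_lim u l.
Proof.
  intros Hu e He. destruct (Hu e He) as [K HK]. exists (K + N)%nat. intros k Hk.
  replace k with ((k - N) + N)%nat by lia. apply HK. lia.
Qed.

Lemma seq_lim_geometric lam a b c d : 0 < lam < 1 ->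
  seq_lim (fun n => (a + lam ^ n * c, b + lam ^ n * d)) (a, b).
Proof.
  intros Hlam e He. set (K := Rabs c + Rabs d + 1).
  assert (HK : 0 < K) by (unfold K; pose proof (Rabs_pos c); pose proof (Rabs_pos d); lra).
  destruct (pow_eventually_lt lam (e / K) Hlam ltac:(apply Rdiv_lt_0_compat; lra)) as [N HN].
  exists N. intros n Hn. specialize (HN n Hn). pose proof (pow_lt lam n ltac:(lra)).
  eapply Rle_lt_trans; [apply dist_le_sum|]. simpl.
  replace (a + lam ^ n * c - a) with (lam ^ n * c) by ring.
  replace (b + lam ^ n * d - b) with (lam ^ n * d) by ring.
  rewrite !Rabs_mult, (Rabs_pos_eq (lam ^ n)) by lra.
  apply (Rmult_lt_compat_r K) in HN; [|lra]. unfold Rdiv in HN.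
  rewrite Rmult_assoc, Rinv_l, Rmult_1_r in HN by lra.
  unfold K in HN. lra.
Qed.

Lemma finite_pos_lower_bound (h : nat -> R) : (forall m, 0 < h m) ->
  forall N, exists d, 0 < d /\ forall m, (m < N)%nat -> d <= h m.
Proof.
  intros Hh N. induction N as [|N [d [Hd HN]]].
  - exists 1. split; [lra | intros; lia].
  - exists (Rmin d (h N)). split; [apply Rmin_pos; auto|].
    intros m Hm. destruct (Nat.eq_dec m N) as [->|Hne]; [apply Rmin_r|].
    eapply Rle_trans; [apply Rmin_l | apply HN; lia].
Qed.

Lemma closure_range (u : nat -> pt) p :
  closure (fun q => exists n, q = u n) p ->
  (exists n, p = u n) \/ forall N, closure (fun q => exists n, (N <= n)%nat /\ q = u n) p.
Proof.
  intros Hp. destruct (classic (exists n, p = u n)) as [|Hnot]; [left; auto | right].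
  intros N e He.
  assert (Hpos : forall m, 0 < dist p (u m)) by (intros m; apply dist_pos; eauto).
  destruct (finite_pos_lower_bound _ Hpos N) as [d [Hd HdN]].
  destruct (Hp (Rmin e d) ltac:(apply Rmin_pos; lra)) as [q [[n ->] Hq]].
  exists (u n). split; [|exact (Rlt_le_trans _ _ _ Hq (Rmin_l _ _))].
  exists n. split; auto. destruct (Nat.le_gt_cases N n) as [|Hn]; auto.
  specialize (HdN n Hn). pose proof (Rmin_r e d). lra.
Qed.

(** * Atoms *)

Section Atoms.
Variables (X X1 X2 : pset) (f : pt -> pt).

Lemma Fop_mem i (A : pset) p : A p -> Xi X1 X2 i p -> Fop X1 X2 f i A (f p).
Proof. intros HA Hi. apply closure_incl. eauto. Qed.

Lemma Fop_sub i (A C : pset) : closed C -> (forall p, A p -> Xi X1 X2 i p -> C (f p)) ->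
  forall q, Fop X1 X2 f i A q -> C q.
Proof. intros HC HAC q. apply closure_min; auto. intros r [p [Hp [Hi ->]]]. auto. Qed.

Lemma atom_snoc w i : atom X X1 X2 f (w ++ i :: nil) = Fop X1 X2 f i (atom X X1 X2 f w).
Proof. unfold atom. apply fold_left_app. Qed.

Lemma closed_atom w : closed X -> closed (atom X X1 X2 f w).
Proof.
  intros HX. induction w as [|i w _] using rev_ind; [exact HX|].
  rewrite atom_snoc. apply closed_closure.
Qed.

Lemma fold_Fop_repeat_orbit i (A : pset) n p : A p ->
  (forall j, (j < n)%nat -> Xi X1 X2 i (Nat.iter j f p)) ->
  fold_left (fun B i => Fop X1 X2 f i B) (repeat i n) A (Nat.iter n f p).
Proof.
  revert A p. induction n as [|n IH]; intros A p HA Hit; [exact HA|].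
  rewrite Nat.iter_succ_r. apply IH.
  - apply Fop_mem; [exact HA | exact (Hit 0%nat ltac:(lia))].
  - intros j Hj. rewrite <- Nat.iter_succ_r. apply Hit. lia.
Qed.

End Atoms.

(** * The example *)

Section Example.
Variables (lam : R) (f : pt -> pt).
Hypothesis hlam : 0 < lam < 1.
Hypothesis hf1 : forall p, X1ex p -> f p = f1ex lam p.
Hypothesis hf2 : forall p, X2ex p -> f p = f2ex lam p.

Local Notation Xt := (Xtilde Xsq X1ex X2ex f).
Local Notation atomex := (atom Xsq X1ex X2ex f).

Lemma X2ex_f2ex p : X2ex p -> X2ex (f2ex lam p).
Proof. destruct p as [x y]. unfold X2ex, Xsq, f2ex; simpl. intros [[[? ?] [? ?]] ?]. nra. Qed.

Lemma X2ex_orbit p : X2ex p -> forall n,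
  X2ex (Nat.iter n f p) /\ Nat.iter n f p = (lam ^ n * fst p, 1 - lam ^ n * (1 - snd p)).
Proof.
  intros Hp n. induction n as [|n [IH1 IH2]].
  - split; [exact Hp | destruct p; simpl; f_equal; ring].
  - rewrite Nat.iter_succ, hf2 by exact IH1. split; [apply X2ex_f2ex, IH1|].
    rewrite IH2. unfold f2ex; simpl. f_equal; ring.
Qed.

Lemma X1ex_axis_orbit a : 0 < a <= 1 -> forall n,
  X1ex (Nat.iter n f (a, 0)) /\ Nat.iter n f (a, 0) = (lam ^ n * a, 0).
Proof.
  intros Ha n. induction n as [|n [IH1 IH2]].
  - split; [unfold X1ex, Xsq; simpl; split; [lra | nra] | simpl; f_equal; ring].
  - rewrite Nat.iter_succ, hf1, IH2 by exact IH1. unfold f1ex; simpl.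
    pose proof (pow_lt lam n ltac:(lra)). pose proof (pow_le_one lam n ltac:(lra)).
    assert (0 < lam ^ n * a <= 1) by (split; [apply Rmult_lt_0_compat | nra]; lra).
    assert (0 < lam * (lam ^ n * a) <= 1) by (split; [apply Rmult_lt_0_compat | nra]; lra).
    split; [unfold X1ex, Xsq; simpl; split; [lra | nra] | f_equal; ring].
Qed.

Lemma Xtilde_iff z : Xt z <-> forall n, X1ex (Nat.iter n f z) \/ X2ex (Nat.iter n f z).
Proof.
  unfold Xtilde, Delta. split; intros H n.
  - destruct (H n) as [HX HD]. destruct (classic (X1ex (Nat.iter n f z))); tauto.
  - destruct (H n) as [H1 | H2]; [pose proof (proj1 H1) | pose proof (proj1 H2)]; tauto.
Qed.

Lemma Xtilde_fst z : Xt z -> forall n, fst (Nat.iter n f z) = lam ^ n * fst z.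
Proof.
  intros Hz n. pose proof (proj1 (Xtilde_iff z) Hz) as Hcases. induction n as [|n IH]; [simpl; ring|].
  rewrite Nat.iter_succ. destruct (Hcases n) as [Hc|Hc].
  - rewrite hf1 by exact Hc. unfold f1ex; simpl. rewrite IH; ring.
  - rewrite hf2 by exact Hc. unfold f2ex; simpl. rewrite IH; ring.
Qed.

Lemma Xtilde_orbit_lim z : Xt z ->
  seq_lim (fun n => Nat.iter n f z) (0, 0) \/ seq_lim (fun n => Nat.iter n f z) (0, 1).
Proof.
  intros Hz. pose proof (proj1 (Xtilde_iff z) Hz) as Hcases.
  destruct (classic (exists N, X2ex (Nat.iter N f z))) as [[N HN] | HN].
  - right. apply (seq_lim_shift _ N).
    apply (seq_lim_ext (fun k => (0 + lam ^ k * fst (Nat.iter N f z),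
                                  1 + lam ^ k * (snd (Nat.iter N f z) - 1)))).
    + intros k. rewrite Nat.iter_add. destruct (X2ex_orbit _ HN k) as [_ ->]. f_equal; ring.
    + apply seq_lim_geometric, hlam.
  - left. apply (seq_lim_ext (fun n => (0 + lam ^ n * fst z, 0 + lam ^ n * snd z))).
    + intros n. induction n as [|n IH]; [destruct z; simpl; f_equal; ring|].
      destruct (Hcases n) as [Hc|Hc]; [|exfalso; eauto].
      rewrite Nat.iter_succ, hf1, <- IH by exact Hc. unfold f1ex; simpl. f_equal; ring.
    + apply seq_lim_geometric, hlam.
Qed.

Lemma omega_sub z y : Xt z -> omega f z y -> y = (0, 0) \/ y = (0, 1).
Proof.
  intros Hz [n [Hn Hy]].
  destruct (Xtilde_orbit_lim z Hz) as [Hl|Hl]; [left|right];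
    exact (seq_lim_unique _ _ _ Hy (seq_lim_subseq _ _ _ Hn Hl)).
Qed.

Lemma iter_top n : Nat.iter n f (0, 1) = (0, 1).
Proof.
  assert (Htop : X2ex (0, 1)) by (unfold X2ex, Xsq; simpl; lra).
  destruct (X2ex_orbit _ Htop n) as [_ ->]. simpl. f_equal; ring.
Qed.

Lemma Xtilde_top : Xt (0, 1).
Proof.
  apply Xtilde_iff. intros n. right. rewrite iter_top. unfold X2ex, Xsq; simpl; lra.
Qed.

Lemma Xtilde_axis a : 0 < a <= 1 -> Xt (a, 0).
Proof. intros Ha. apply Xtilde_iff. intros n. left. apply X1ex_axis_orbit, Ha. Qed.

Lemma divergent_id : divergent (fun k => k).
Proof. intros N. exists N. auto. Qed.

Lemma Lset_char p : Lset Xsq X1ex X2ex f p <-> p = (0, 0) \/ p = (0, 1).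
Proof.
  split.
  - apply (closure_min _ (fun q => q = (0, 0) \/ q = (0, 1))); [apply closed_pair|].
    intros q [z [Hz Hq]]. exact (omega_sub z q Hz Hq).
  - intros [-> | ->]; apply closure_incl.
    + exists (1, 0). split; [apply Xtilde_axis; lra|].
      exists (fun k => k). split; [exact divergent_id|].
      apply (seq_lim_ext (fun k => (0 + lam ^ k * 1, 0 + lam ^ k * 0))); [|apply seq_lim_geometric, hlam].
      intros k. destruct (X1ex_axis_orbit 1 ltac:(lra) k) as [_ ->]. f_equal; ring.
    + exists (0, 1). split; [exact Xtilde_top|].
      exists (fun k => k). split; [exact divergent_id|].
      intros e He. exists 0%nat. intros k _. rewrite iter_top, dist_refl. exact He.
Qed.

Lemma nonwandering_fst p : Omega Xsq X1ex X2ex f p -> fst p = 0.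
Proof.
  intros [[[Hx0 _] _] Hnw]. apply NNPP. intros Hx.
  set (e := fst p / 2).
  destruct (Hnw e ltac:(unfold e; lra)) as [n [Hn Hret]].
  destruct (pow_eventually_lt lam e hlam ltac:(unfold e; lra)) as [N HN].
  destruct (Hn N) as [K HK]. destruct (Hret K) as [z [_ [Hz Hback]]].
  pose proof (dist_fst p (Nat.iter (n K) f z)) as Hd.
  rewrite (Xtilde_fst z Hz) in Hd.
  destruct (Hz 0%nat) as [[[Hz0 Hz1] _] _]. simpl in Hz0, Hz1.
  specialize (HN (n K) (HK K (le_n K))). pose proof (pow_lt lam (n K) ltac:(lra)).
  destruct (Rabs_def2 _ _ (Rle_lt_trans _ _ _ Hd Hback)).
  assert (lam ^ n K * fst z <= lam ^ n K) by nra. unfold ball, e in *. lra.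
Qed.

(* A point near (0, y) with 0 < y < 1 lies in X2, and f2 then pushes its orbit up towards (0, 1). *)
Lemma nonwandering_snd p : Omega Xsq X1ex X2ex f p -> fst p = 0 -> snd p = 0 \/ snd p = 1.
Proof.
  intros [[_ [Hy0 Hy1]] Hnw] Hx. apply NNPP. intros [Hy0' Hy1']%not_or_and.
  set (y := snd p) in *.
  set (e := Rmin y (1 - y) / 2).
  assert (He : 0 < e) by (unfold e; pose proof (Rmin_pos y (1 - y) ltac:(lra) ltac:(lra)); lra).
  assert (Hey : e <= y / 2) by (unfold e; pose proof (Rmin_l y (1 - y)); lra).
  assert (He1 : e <= (1 - y) / 2) by (unfold e; pose proof (Rmin_r y (1 - y)); lra).
  destruct (Hnw e He) as [n [Hn Hret]].
  destruct (pow_eventually_lt lam ((1 - y) / 2) hlam ltac:(lra)) as [N HN].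
  destruct (Hn N) as [K HK]. destruct (Hret K) as [z [Hnear [Hz Hback]]].
  destruct (Hz 0%nat) as [HzX _]. simpl in HzX.
  pose proof (dist_fst p z) as Hdx. pose proof (dist_snd p z) as Hdy.
  unfold ball in Hnear, Hback.
  destruct (Rabs_def2 _ _ (Rle_lt_trans _ _ _ Hdx Hnear)) as [_ Hzx].
  destruct (Rabs_def2 _ _ (Rle_lt_trans _ _ _ Hdy Hnear)) as [Hzy _].
  rewrite Hx in Hzx. fold y in Hzy.
  assert (HzX2 : X2ex z).
  { destruct HzX as [[? ?] [? ?]]. split; [split; split; lra|]. nra. }
  destruct (X2ex_orbit z HzX2 (n K)) as [_ Hit].
  pose proof (dist_snd p (Nat.iter (n K) f z)) as Hd. rewrite Hit in Hd, Hback. simpl in Hd. fold y in Hd.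
  destruct (Rabs_def2 _ _ (Rle_lt_trans _ _ _ Hd Hback)) as [_ Hb].
  specialize (HN (n K) (HK K (le_n K))). pose proof (pow_lt lam (n K) ltac:(lra)).
  destruct HzX as [_ [_ Hz1]].
  assert (lam ^ n K * (1 - snd z) <= lam ^ n K) by nra. lra.
Qed.

Lemma nonwandering_origin : Omega Xsq X1ex X2ex f (0, 0).
Proof.
  split; [unfold Xsq; simpl; lra|]. intros e He.
  exists (fun k => k). split; [exact divergent_id|]. intros k.
  set (a := Rmin (e / 2) 1).
  assert (Ha : 0 < a <= 1) by (split; [apply Rmin_pos; lra | apply Rmin_r]).
  assert (Hae : a <= e / 2) by apply Rmin_l.
  destruct (X1ex_axis_orbit a Ha k) as [_ Hit].
  pose proof (pow_lt lam k ltac:(lra)). pose proof (pow_le_one lam k ltac:(lra)).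
  exists (a, 0). unfold ball. split; [|split; [apply Xtilde_axis, Ha|]].
  - eapply Rle_lt_trans; [apply dist_le_sum|]. simpl.
    rewrite Rminus_diag, Rabs_R0, Rabs_minus_sym, Rminus_0_r, Rabs_pos_eq; lra.
  - rewrite Hit. eapply Rle_lt_trans; [apply dist_le_sum|]. simpl.
    rewrite Rminus_diag, Rabs_R0, Rabs_minus_sym, Rminus_0_r, Rabs_pos_eq; nra.
Qed.

Lemma nonwandering_top : Omega Xsq X1ex X2ex f (0, 1).
Proof.
  split; [unfold Xsq; simpl; lra|]. intros e He.
  exists (fun k => k). split; [exact divergent_id|]. intros k.
  exists (0, 1). unfold ball. rewrite iter_top, dist_refl. auto using Xtilde_top.
Qed.

Lemma Omega_char p : Omega Xsq X1ex X2ex f p <-> p = (0, 0) \/ p = (0, 1).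
Proof.
  split.
  - intros Hp. pose proof (nonwandering_fst p Hp) as Hx.
    destruct p as [x y]. simpl in Hx. subst x.
    destruct (nonwandering_snd _ Hp eq_refl) as [Hy | Hy]; simpl in Hy; subst y; auto.
  - intros [-> | ->]; [exact nonwandering_origin | exact nonwandering_top].
Qed.

Definition region1 (n : nat) : pset :=
  fun q => Xsq q /\ fst q <= lam ^ n /\ snd q <= lam ^ n.

Definition region2 (n m : nat) : pset :=
  fun q => Xsq q /\ fst q <= lam ^ n /\ 1 - lam ^ m <= snd q /\
           snd q <= 1 - lam ^ m + lam ^ n /\ fst q ^ 2 <= snd q.

Local Hint Resolve continuous_const continuous_fst continuous_snd continuous_pow : core.

Lemma closed_region1 n : closed (region1 n).
Proof. unfold region1, Xsq. repeat apply closed_and; apply closed_le; auto. Qed.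

Lemma closed_region2 n m : closed (region2 n m).
Proof. unfold region2, Xsq. repeat apply closed_and; apply closed_le; auto. Qed.

Lemma region1_f1ex n p : region1 n p -> X1ex p -> region1 (S n) (f1ex lam p).
Proof.
  destruct p as [x y]. unfold region1, Xsq, f1ex; simpl. intros [[[? ?] [? ?]] [? ?]] _.
  pose proof (pow_le_one lam n ltac:(lra)). repeat split; nra.
Qed.

Lemma region1_f2ex n p : region1 n p -> X2ex p -> region2 (S n) 1 (f2ex lam p).
Proof.
  destruct p as [x y]. unfold region1, region2, X2ex, Xsq, f2ex; simpl.
  intros [[[? ?] [? ?]] [? ?]] [_ ?].
  pose proof (pow_le_one lam n ltac:(lra)). repeat split; nra.
Qed.

Lemma region2_f2ex n m p : region2 n m p -> X2ex p -> region2 (S n) (S m) (f2ex lam p).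
Proof.
  destruct p as [x y]. unfold region2, X2ex, Xsq, f2ex; simpl.
  intros [[[? ?] [? ?]] [? [? [? ?]]]] _.
  pose proof (pow_le_one lam m ltac:(lra)). repeat split; nra.
Qed.

Lemma region2_X1ex_disjoint n m p : region2 n m p -> ~ X1ex p.
Proof. intros [_ [_ [_ [_ ?]]]] [_ ?]. lra. Qed.

Lemma atom_regions w : (forall q, atomex w q -> region1 (length w) q) \/
  exists m, forall q, atomex w q -> region2 (length w) m q.
Proof.
  induction w as [|i w IH] using rev_ind.
  - left. intros q Hq. unfold region1; simpl. destruct Hq as [? ?]. repeat split; lra.
  - rewrite atom_snoc, length_app, Nat.add_1_r.
    destruct IH as [H1 | [m H2]], i.
    + right. exists 1%nat. apply Fop_sub; [apply closed_region2|]. intros p Hp Hi.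
      rewrite hf2 by exact Hi. apply region1_f2ex; auto.
    + left. apply Fop_sub; [apply closed_region1|]. intros p Hp Hi.
      rewrite hf1 by exact Hi. apply region1_f1ex; auto.
    + right. exists (S m). apply Fop_sub; [apply closed_region2|]. intros p Hp Hi.
      rewrite hf2 by exact Hi. apply region2_f2ex; auto.
    + left. apply Fop_sub; [apply closed_region1|]. intros p Hp Hi.
      exfalso. exact (region2_X1ex_disjoint _ _ _ (H2 p Hp) Hi).
Qed.

Lemma Lambda_sub p : Lambda Xsq X1ex X2ex f p ->
  closure (fun q => exists n : nat, q = (0, 1 - lam ^ n)) p.
Proof.
  intros HL e He. destruct (pow_eventually_lt lam (e / 2) hlam ltac:(lra)) as [N HN].
  destruct (HL (S N) ltac:(lia)) as [w [Hlw Hw]].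
  specialize (HN (S N) (Nat.le_succ_diag_r N)).
  destruct (atom_regions w) as [H1 | [m H2]].
  - destruct (H1 p Hw) as [[[? ?] [? ?]] [Hx Hy]]. rewrite Hlw in Hx, Hy.
    exists (0, 1 - lam ^ 0). split; [exists 0%nat; reflexivity|].
    eapply Rle_lt_trans; [apply dist_le_sum|]. simpl.
    rewrite !Rabs_pos_eq; lra.
  - destruct (H2 p Hw) as [[[? ?] [? ?]] [Hx [Hy1 [Hy2 _]]]]. rewrite Hlw in Hx, Hy2.
    exists (0, 1 - lam ^ m). split; [exists m; reflexivity|].
    eapply Rle_lt_trans; [apply dist_le_sum|]. simpl.
    rewrite !Rabs_pos_eq; lra.
Qed.

Lemma closure_geometric_points p : closure (fun q => exists n : nat, q = (0, 1 - lam ^ n)) p ->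
  (exists n, p = (0, 1 - lam ^ n)) \/ p = (0, 1).
Proof.
  intros Hp. destruct (closure_range (fun n => (0, 1 - lam ^ n)) p Hp) as [|Htail]; [left; auto | right].
  assert (Hbounds : forall N, (0 <= fst p /\ fst p <= 0) /\ (1 - lam ^ N <= snd p /\ snd p <= 1)).
  { intros N.
    apply (closure_min (fun q => exists n, (N <= n)%nat /\ q = (0, 1 - lam ^ n))
             (fun q => (0 <= fst q /\ fst q <= 0) /\ (1 - lam ^ N <= snd q /\ snd q <= 1))).
    - repeat apply closed_and; apply closed_le; auto.
    - intros q [n [Hn ->]]. simpl.
      replace n with (N + (n - N))%nat by lia. rewrite pow_add.
      pose proof (pow_lt lam N ltac:(lra)). pose proof (pow_lt lam (n - N) ltac:(lra)).
      pose proof (pow_le_one lam (n - N) ltac:(lra)). repeat split; nra.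
    - exact (Htail N). }
  destruct (Hbounds 0%nat) as [[Hx0 Hx1] [_ Hy1]].
  destruct (Rle_lt_or_eq_dec _ _ Hy1) as [Hlt | Hy].
  - destruct (pow_eventually_lt lam (1 - snd p) hlam ltac:(lra)) as [N HN].
    specialize (HN N (le_n N)). destruct (Hbounds N) as [_ [? _]]. lra.
  - destruct p as [x y]. simpl in *. f_equal; lra.
Qed.

Lemma closed_Xsq : closed Xsq.
Proof. unfold Xsq. repeat apply closed_and; apply closed_le; auto. Qed.

Lemma atom_true_axis n t : 0 < t <= 1 -> atomex (repeat true n) (0, 1 - lam ^ n * (1 - t)).
Proof.
  intros Ht. assert (HX2 : X2ex (0, t)) by (unfold X2ex, Xsq; simpl; lra).
  destruct (X2ex_orbit _ HX2 n) as [_ Hit]. simpl in Hit.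
  replace (0, 1 - lam ^ n * (1 - t)) with (Nat.iter n f (0, t)) by (rewrite Hit; f_equal; ring).
  apply fold_Fop_repeat_orbit; [apply HX2 | intros j _; apply X2ex_orbit, HX2].
Qed.

Lemma atom_false_contains k a b : 0 < a <= lam ^ S k -> 0 <= b -> b * lam < a ^ 2 ->
  atomex (repeat false k) (a, b).
Proof.
  revert a b. induction k as [|k IH]; intros a b Ha Hb Hba.
  - simpl in Ha. unfold atom, Xsq; simpl. repeat split; nra.
  - change (repeat false (S k)) with (false :: repeat false k).
    rewrite repeat_cons, atom_snoc.
    assert (Ea : a = lam * (a / lam)) by (field; lra).
    assert (Eb : b = lam * (b / lam)) by (field; lra).
    set (u := a / lam) in Ea. set (v := b / lam) in Eb. clearbody u v. subst a b.
    simpl in Ha. pose proof (pow_lt lam k ltac:(lra)). pose proof (pow_le_one lam k ltac:(lra)).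
    assert (Hu : 0 < u <= lam ^ S k) by (simpl; split; nra).
    assert (Hv : 0 <= v) by nra.
    assert (Hvu2 : v < u ^ 2) by (apply (Rmult_lt_reg_l (lam * lam)); nra).
    assert (Hvu : v * lam < u ^ 2) by nra.
    assert (Hu1 : u <= 1) by (simpl in Hu; nra).
    assert (HX1 : X1ex (u, v)) by (unfold X1ex, Xsq; simpl; repeat split; nra).
    replace (lam * u, lam * v) with (f (u, v)) by (rewrite hf1 by exact HX1; reflexivity).
    apply Fop_mem; [apply IH; auto | exact HX1].
Qed.

(* Points just above the parabola and close to the origin are reached after k steps in X1;
   m further steps in X2 then bring them close to (0, 1 - lam^m). *)
Lemma atom_point k m : atomex (repeat false k ++ repeat true m) (0, 1 - lam ^ m).
Proof.
  apply (closed_atom _ _ _ _ _ closed_Xsq). intros e He.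
  pose proof (pow_lt lam k ltac:(lra)). pose proof (pow_le_one lam k ltac:(lra)).
  set (a := Rmin (lam ^ S k) (e / 4)).
  assert (Ha : 0 < a) by (apply Rmin_pos; [apply pow_lt|]; lra).
  assert (Hak : a <= lam ^ S k) by apply Rmin_l.
  assert (Hae : a <= e / 4) by apply Rmin_r.
  assert (Hal : a <= lam) by (simpl in Hak; nra).
  set (b := a ^ 2 * (1 + lam) / (2 * lam)).
  assert (Hbl : b * lam = a ^ 2 * (1 + lam) / 2) by (unfold b; field; lra).
  assert (Hb : a ^ 2 < b /\ b <= a).
  { pose proof (pow_lt a 2 Ha). split.
    - apply (Rmult_lt_reg_r lam); [lra|]. rewrite Hbl. nra.
    - apply (Rmult_le_reg_r lam); [lra|]. rewrite Hbl. nra. }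
  assert (HX2 : X2ex (a, b)) by (unfold X2ex, Xsq; simpl; repeat split; nra).
  destruct (X2ex_orbit _ HX2 m) as [_ Hit]. simpl in Hit.
  pose proof (pow_lt lam m ltac:(lra)). pose proof (pow_le_one lam m ltac:(lra)).
  exists (Nat.iter m f (a, b)). split.
  - unfold atom. rewrite fold_left_app.
    apply fold_Fop_repeat_orbit; [|intros j _; apply X2ex_orbit, HX2].
    apply atom_false_contains; nra.
  - rewrite Hit. eapply Rle_lt_trans; [apply dist_le_sum|]. simpl.
    assert (Rabs (0 - lam ^ m * a) <= a) by (apply Rabs_le; nra).
    assert (Rabs (1 - lam ^ m - (1 - lam ^ m * (1 - b))) <= a) by (apply Rabs_le; nra).
    lra.
Qed.

Lemma Lambda_sup p : closure (fun q => exists n : nat, q = (0, 1 - lam ^ n)) p ->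
  Lambda Xsq X1ex X2ex f p.
Proof.
  intros Hp n _. destruct (closure_geometric_points p Hp) as [[m ->] | ->].
  - destruct (Nat.le_gt_cases m n) as [Hmn | Hnm].
    + exists (repeat false (n - m) ++ repeat true m). split; [|apply atom_point].
      rewrite length_app, !repeat_length. lia.
    + exists (repeat true n). split; [apply repeat_length|].
      pose proof (pow_lt_1_compat lam (m - n) ltac:(lra) ltac:(lia)).
      pose proof (pow_lt lam (m - n) ltac:(lra)).
      assert (Hpow : lam ^ m = lam ^ n * lam ^ (m - n)) by (rewrite <- pow_add; f_equal; lia).
      rewrite Hpow. replace (1 - lam ^ n * lam ^ (m - n))
        with (1 - lam ^ n * (1 - (1 - lam ^ (m - n)))) by ring.
      apply atom_true_axis. lra.
  - exists (repeat true n). split; [apply repeat_length|].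
    replace (0, 1) with (0, 1 - lam ^ n * (1 - 1)) by (f_equal; ring).
    apply atom_true_axis. lra.
Qed.
End Example.

Theorem proposition3 (lam : R) (hlam : 0 < lam < 1) (f : pt -> pt)
  (hfX : forall p, Xsq p -> Xsq (f p))
  (hf1 : forall p, X1ex p -> f p = f1ex lam p)
  (hf2 : forall p, X2ex p -> f p = f2ex lam p) :
  (forall p, Lset Xsq X1ex X2ex f p <-> (p = (0, 0) \/ p = (0, 1))) /\
  (forall p, Omega Xsq X1ex X2ex f p <-> (p = (0, 0) \/ p = (0, 1))) /\
  (forall p, Lambda Xsq X1ex X2ex f p <->
             closure (fun q => exists n : nat, q = (0, 1 - lam ^ n)) p).
Proof.
  split; [|split]; intros p.
  - apply (Lset_char lam); assumption.
  - apply (Omega_char lam); assumption.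
  - split; [apply (Lambda_sub lam f) | apply (Lambda_sup lam f)]; assumption.
Qed.
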